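(* Let $X$ and $Y$ be topological spaces, let $f: X \to X$ and $g: Y \to Y$ be maps, and let $\Phi: X \to \mathbb{R}^n$ and $\Psi: Y \to \mathbb{R}^n$ be probe functions. Suppose $h: X \to Y$ is continuous and surjective with $h \circ f = g \circ h$, and that $h$ is descriptively continuous. If $f$ is descriptively transitive with respect to $\Phi$, then $g$ is descriptively transitive with respect to $\Psi$.
   Context: A probe function is an arbitrary function into $\mathbb{R}^n$; for $A \subseteq X$ write $\Phi(A) = \{\Phi(a) : a \in A\}$. Subsets $A, B \subseteq X$ are descriptively near, written $A \,\delta_{\Phi}\, B$, if $\Phi(A) \cap \Phi(B) \neq \emptyset$ (similarly $\delta_{\Psi}$ on $Y$). The map $h$ is descriptively continuous if $A \,\delta_{\Phi}\, B$ implies $h(A) \,\delta_{\Psi}\, h(B)$ for all $A, B \subseteq X$. The descriptive intersection is $A \cap_{\Phi} B = \{x \in A \cup B : \Phi(x) \in \Phi(A) \cap \Phi(B)\}$. A map $f$ is descriptively transitive with respect to $\Phi$ if for all nonempty open $U, V \subseteq X$ there is an integer $k > 0$ with $f^k(U) \cap_{\Phi} V \neq \emptyset$ (analogously for $g$ and $\Psi$ on $Y$). *)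

From HB Require Import structures.
From mathcomp Require Import all_boot all_order all_algebra.
From mathcomp Require Import all_classical all_reals topology.
Set Implicit Arguments. Unset Strict Implicit. Unset Printing Implicit Defensive.
Import Order.TTheory GRing.Theory Num.Theory.
Local Open Scope classical_set_scope.

Definition desc_near (T : Type) (R : realType) (n : nat)
  (Phi : T -> 'rV[R]_n) (A B : set T) : Prop :=
  (Phi @` A) `&` (Phi @` B) !=set0.

Definition desc_continuous (T U : Type) (R : realType) (n : nat)
  (Phi : T -> 'rV[R]_n) (Psi : U -> 'rV[R]_n) (h : T -> U) : Prop :=
  forall A B : set T, desc_near Phi A B -> desc_near Psi (h @` A) (h @` B).

Definition desc_inter (T : Type) (R : realType) (n : nat)
  (Phi : T -> 'rV[R]_n) (A B : set T) : set T :=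
  [set x | (A `|` B) x /\ ((Phi @` A) `&` (Phi @` B)) (Phi x)].

Definition desc_transitive (T : topologicalType) (R : realType) (n : nat)
  (Phi : T -> 'rV[R]_n) (f : T -> T) : Prop :=
  forall U V : set T, open U -> open V -> U !=set0 -> V !=set0 ->
    exists k : nat, (0 < k)%N /\ desc_inter Phi (iter k f @` U) V !=set0.

From HB Require Import structures.
From mathcomp Require Import all_boot all_order all_algebra.
From mathcomp Require Import all_classical all_reals topology.
Set Implicit Arguments. Unset Strict Implicit. Unset Printing Implicit Defensive.
Local Open Scope classical_set_scope.

(* The preimages under h of nonempty open sets U, V of Y are nonempty and open, so
   transitivity of f yields k with Phi(f^k(h^-1 U)) meeting Phi(h^-1 V). Descriptive
   continuity pushes this through h, and since h f^k = g^k h and h is onto,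
   h(f^k(h^-1 U)) = g^k U and h(h^-1 V) = V. *)

Lemma iter_semiconj (T U : Type) (h : T -> U) (f : T -> T) (g : U -> U) (k : nat) :
  h \o f = g \o h -> h \o iter k f = iter k g \o h.
Proof.
move=> hfg; apply: funext; elim: k => [//|k IH] x /=.
by rewrite -[iter k g (h x)]IH; exact: (congr1 (fun F => F (iter k f x)) hfg).
Qed.

Lemma image_iter_semiconj (T U : Type) (h : T -> U) (f : T -> T) (g : U -> U)
    (k : nat) (A : set T) :
  h \o f = g \o h -> h @` (iter k f @` A) = iter k g @` (h @` A).
Proof. by move=> hfg; rewrite !image_comp (iter_semiconj k hfg). Qed.

Lemma preimage_surj_neq0 (T U : Type) (h : T -> U) (B : set U) :
  (forall y, exists x, h x = y) -> B !=set0 -> h @^-1` B !=set0.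
Proof.
move=> hs [y By]; have [x hxy] := hs y.
by exists x; rewrite /preimage /= hxy.
Qed.

Lemma image_preimage_surj (T U : Type) (h : T -> U) (B : set U) :
  (forall y, exists x, h x = y) -> h @` (h @^-1` B) = B.
Proof.
move=> hs; apply: image_preimage; rewrite -subTset => y _.
by have [x hxy] := hs y; exists x.
Qed.

Lemma desc_inter_neq0 (T : Type) (R : realType) (n : nat) (Phi : T -> 'rV[R]_n)
    (A B : set T) :
  desc_inter Phi A B !=set0 <-> desc_near Phi A B.
Proof.
split=> [[x [_ PhiAB]]|[_ [[a Aa <-] PhiB]]]; first by exists (Phi x).
by exists a; split; [left | split; [exists a |]].
Qed.

Theorem lemma3 (R : realType) (n : nat) (X Y : topologicalType)
  (f : X -> X) (g : Y -> Y) (Phi : X -> 'rV[R]_n) (Psi : Y -> 'rV[R]_n)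
  (h : X -> Y) :
  continuous h ->
  (forall y : Y, exists x : X, h x = y) ->
  h \o f = g \o h ->
  desc_continuous Phi Psi h ->
  desc_transitive Phi f ->
  desc_transitive Psi g.
Proof.
move=> hc hs hfg hd ft U V oU oV U0 V0.
have oU' : open (h @^-1` U) by move/continuousP: hc; apply.
have oV' : open (h @^-1` V) by move/continuousP: hc; apply.
have [k [k0 fUV]] := ft _ _ oU' oV'
  (preimage_surj_neq0 hs U0) (preimage_surj_neq0 hs V0).
exists k; split => //; apply/desc_inter_neq0.
have := hd _ _ (iffLR (desc_inter_neq0 _ _ _) fUV).
by rewrite (image_iter_semiconj _ _ hfg) !image_preimage_surj.
Qed.
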